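(* Let $M\in\mathrm{SL}(2,\mathbb Z)$ be a hyperbolic matrix, $N\in\mathbb N$, and $\{\phi_j\}_{j=1}^N$ an eigenbasis of $\hat M$ in $\mathcal H_N$ (setting in the context). Let $1\le p<\infty$, $L>0$, and let $D=D(r)$ satisfy $1/D=o(r)$ as $r\to0$; let $b^\pm_{q,r}$ be the majorant/minorant trigonometric polynomials of the arcs $B_1(q,r)\subset\mathbb T^1$ described in the context. Define $$\mathcal S^\pm(N,L):=\Big\{1\le j\le N:\ \sup_{q\in\mathbb T^1}\Big|\frac{\langle\mathrm{Op}_N(b^\pm_{q,r})\phi_j,\phi_j\rangle}{\mu(b^\pm_{q,r})}-1\Big|\ge L\Big\}.$$ Then $$\frac{\#\mathcal S^\pm(N,L)}{N}\le\frac{c\,D^{p-1}}{L^p}\sum_{m\in\mathbb Z,\,1\le|m|\le D}V_p\big(N,\hat T_N(m,0)\big),$$ where $c$ depends on $p$.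
   Context: $M=\exp\begin{pmatrix}\gamma&\beta\\-\alpha&-\gamma\end{pmatrix}\in\mathrm{SL}(2,\mathbb Z)$, $\gamma^2>\alpha\beta$. With $h=1/N$: $\hat q\psi=q\psi$, $\hat p\psi=\frac{h}{2\pi i}\psi'$, $\hat T_v=\exp(-\frac{2\pi i}{h}(v_1\hat p-v_2\hat q))$, $\hat H=\frac12\alpha\hat q^2+\frac12\beta\hat p^2+\frac\gamma2(\hat q\hat p+\hat p\hat q)$, $\hat M=e^{-2\pi i\hat H/h}$ acting on the $N$-dimensional Hilbert space $\mathcal H_N$ of distributions $\psi(q)=\sum_{k\in\mathbb Z}\Psi(k)\delta(q-(k+\kappa_1)/N)$, $\Psi(k+N)=e^{-2\pi i\kappa_2}\Psi(k)$ (fixed $\kappa\in\mathbb T^2$ chosen so that $\hat M$ preserves $\mathcal H_N$), inner product $\frac1N\sum_{k=1}^N\Psi(k)\overline{\Phi(k)}$; an eigenbasis is an orthonormal basis of eigenvectors of $\hat M$. $\hat T_N(n):=\hat T_{n/N}$ for $n\in\mathbb Z^2$. A function $a(q)=\sum_{m\in\mathbb Z}\tilde a(m)e^{2\pi imq}$ on $\mathbb T^1$ is quantized as $\mathrm{Op}_N(a)=\sum_m\tilde a(m)\hat T_N(m,0)$, and $\mu(a)=\int_{\mathbb T^1}a=\tilde a(0)$. For $m\ne0$, $V_p(N,\hat T_N(m,0)):=\frac1N\sum_{j=1}^N|\langle\hat T_N(m,0)\phi_j,\phi_j\rangle|^p$. Majorants/minorants: with $rD\ge1$, $a_r^\pm$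 are trigonometric polynomials on $\mathbb T^1$ with $a_r^-\le\chi_{B_1(0,r)}\le a_r^+$, $\widetilde{a_r^\pm}(m)=0$ for $|m|\ge D$, $\widetilde{a_r^\pm}(0)=\mathrm{Vol}(B_1(0,r))+O(1/D)$, $|\widetilde{a_r^\pm}(m)|\le c_0r$ for all $m$ with an absolute constant $c_0$; $b^\pm_{q,r}(y):=a_r^\pm(y-q)$. *)

From HB Require Import structures.
From mathcomp Require Import all_boot all_order all_algebra.
From mathcomp Require Import all_classical all_reals all_analysis.
From mathcomp Require Import complex.

Set Implicit Arguments.
Unset Strict Implicit.
Unset Printing Implicit Defensive.

Import Order.TTheory GRing.Theory Num.Theory.
Local Open Scope ring_scope.

Section Defs.
Variable R : realType.
Local Notation C := R[i].

Definition expi (t : R) : C := Complex (cos t) (sin t).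

Definition cabs (z : C) : R := Num.sqrt (complex.Re z ^+ 2 + complex.Im z ^+ 2).

Definition cconj (z : C) : C := Complex (complex.Re z) (- complex.Im z).

Definition zsum (K : nat) (f : int -> C) : C :=
  \sum_(i < (2 * K).+1) f (i%:Z - K%:Z).

(* A trigonometric polynomial on T^1 is given by its Fourier coefficients
   at : int -> C, supported in |m| <= K; its value at y is
   \sum_m at(m) e^{2 pi i m y}. *)
Definition trig_eval (K : nat) (at_ : int -> C) (y : R) : C :=
  zsum K (fun m => at_ m * expi (2 * pi * m%:~R * y)).

(* Fourier coefficients of the translate y |-> a(y - q):  ã(m) e^{-2 pi i m q} *)
Definition transl_coef (at_ : int -> C) (q : R) : int -> C :=
  fun m => at_ m * expi (- (2 * pi * m%:~R * q)).

(* Indicator of the closed arc B_1(0,r) = {y in T^1 : dist(y, Z) <= r}. *)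
Definition arc_ind (r y : R) : R :=
  if `[< exists k : int, `|y - k%:~R| <= r >] then 1 else 0.

(* Vol(B_1(0,r)) (Lebesgue measure on T^1 = R/Z, total mass 1) *)
Definition arc_vol (r : R) : R := Num.min (2 * r) 1.

(* Elements of H_N are represented by their coefficient sequence
   Psi : int -> C, psi(q) = \sum_k Psi(k) delta(q - (k+kappa1)/N),
   subject to Psi(k+N) = e^{-2 pi i kappa2} Psi(k). *)
Definition in_HN (N : nat) (kappa2 : R) (Psi : int -> C) : Prop :=
  forall k : int, Psi (k + N%:Z) = expi (- (2 * pi * kappa2)) * Psi k.

Definition ipN (N : nat) (Psi Phi : int -> C) : C :=
  (N%:R)^-1 * \sum_(k < N) Psi (k.+1%:Z) * cconj (Phi (k.+1%:Z)).

(* T_N(m,0) = T_{(m/N,0)} = exp(-2 pi i m \hat p) = exp(-(m/N) d/dq):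
   translation psi(q) |-> psi(q - m/N), i.e. Psi(k) |-> Psi(k - m). *)
Definition TN (m : int) (Psi : int -> C) : int -> C := fun k => Psi (k - m).

Definition OpN (K : nat) (at_ : int -> C) (Psi : int -> C) : int -> C :=
  fun k => zsum K (fun m => at_ m * TN m Psi k).

(* orthonormal basis {phi_j}_{j=1}^N of H_N (N orthonormal vectors in the
   N-dimensional space H_N) *)
Definition onb_HN (N : nat) (kappa2 : R) (phi : 'I_N -> int -> C) : Prop :=
  (forall j, in_HN N kappa2 (phi j)) /\
  (forall i j, ipN N (phi i) (phi j) = (i == j)%:R).

Definition Vp (N : nat) (phi : 'I_N -> int -> C) (p : R) (m : int) : R :=
  (N%:R)^-1 * \sum_(j < N) (cabs (ipN N (TN m (phi j)) (phi j))) `^ p.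

Definition D_hyp (D : R -> R) : Prop :=
  forall eps : R, 0 < eps -> exists delta : R, 0 < delta /\
    forall r : R, 0 < r < delta -> 0 < D r /\ (D r)^-1 <= eps * r.

(* a : R -> int -> C is a family (indexed by r) of majorants (sgn = true)
   or minorants (sgn = false) of the arc B_1(0,r), with the properties of
   the context, valid whenever r D(r) >= 1; c0 is the absolute constant and
   C1 the implied constant in O(1/D). *)
Definition arc_approx (D : R -> R) (c0 C1 : R) (sgn : bool)
    (a : R -> int -> C) : Prop :=
  forall r : R, 0 < r -> 1 <= r * D r ->
    [/\ (forall m : int, D r <= `|m|%:~R -> a r m = 0),
        (forall y : R, complex.Im (trig_eval (Num.truncn (D r)) (a r) y) = 0 /\
           (if sgn then arc_ind r y <= complex.Re (trig_eval (Num.truncn (D r)) (a r) y)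
            else complex.Re (trig_eval (Num.truncn (D r)) (a r) y) <= arc_ind r y)),
        cabs (a r 0 - Complex (arc_vol r) 0) <= C1 / D r
      & (forall m : int, cabs (a r m) <= c0 * r)].

(* | <Op_N(b_{q,r}) phi_j, phi_j> / mu(b_{q,r}) - 1 |, with b_{q,r}(y) = a_r(y - q)
   and mu(b_{q,r}) = b~_{q,r}(0) *)
Definition dev (N : nat) (phi : 'I_N -> int -> C) (K : nat)
    (at_ : int -> C) (j : 'I_N) (q : R) : R :=
  cabs (ipN N (OpN K (transl_coef at_ q) (phi j)) (phi j)
          / transl_coef at_ q 0 - 1).

Definition Sexc (N : nat) (phi : 'I_N -> int -> C) (K : nat)
    (at_ : int -> C) (L : R) : {set 'I_N} :=
  [set j : 'I_N | `[< (L%:E <= ereal_sup (range (fun q : R => (dev phi K at_ j q)%:E)))%E >]].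

Definition sumVp (N : nat) (phi : 'I_N -> int -> C) (p D : R) : R :=
  \sum_(1 <= n < (Num.truncn D).+1) (Vp phi p n%:Z + Vp phi p (- n%:Z)).

End Defs.

From mathcomp Require Import all_boot all_order all_algebra.
From mathcomp Require Import all_classical all_reals all_analysis.
From mathcomp Require Import complex ring lra zify.

(* Expanding Op_N(b_{q,r}) = \sum_m b~(m) T_N(m,0), the term m = 0 contributes
   exactly mu(b_{q,r}) = b~(0), because phi_j is a unit vector.  Every
   |b~(m)| is at most c0 r, while |b~(0)| >= 2r - O(1/D) >= r for small r
   (this is where 1/D = o(r) enters), so the deviation is bounded, uniformly
   in q, by c0 \sum_{1 <= |m| <= D} |<T_N(m,0) phi_j, phi_j>|.  Chebyshev's
   inequality for p-th powers and the power mean inequality over the 2D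
   frequencies m then give the bound with c = 2^(p-1) c0^p. *)

Set Implicit Arguments.
Unset Strict Implicit.

Import Order.TTheory GRing.Theory Num.Theory.
Local Open Scope ring_scope.

Section power_mean.
Variables (R : realType) (p : R).
Hypothesis p_ge1 : 1 <= p.

Lemma powR_convex_comb (t a b : R) : 0 <= t <= 1 -> 0 <= a -> 0 <= b ->
  (t * a + (1 - t) * b) `^ p <= t * a `^ p + (1 - t) * b `^ p.
Proof.
case/andP=> t_ge0 t_le1 a_ge0 b_ge0.
have := convex_powR p_ge1 (Itv01 t_ge0 t_le1) (x := a) (y := b).
by rewrite !inE /= !in_itv /= !andbT !convRE; apply.
Qed.

Lemma powR_mean_le (I : Type) (s : seq I) (F : I -> R) : (forall i, 0 <= F i) ->
  (size s)%:R * ((\sum_(i <- s) F i) / (size s)%:R) `^ p <= \sum_(i <- s) F i `^ p.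
Proof.
move=> F_ge0; elim: s => [|y s IH]; first by rewrite big_nil mul0r big_nil.
rewrite /= !big_cons; set n := size s in IH *; set S := \sum_(i <- s) F i in IH *.
have [n0|n_gt0] := posnP n.
  by rewrite /S (size0nil n0) !big_nil !addr0 n0 mul1r divr1.
have nR_gt0 : 0 < n%:R :> R by rewrite ltr0n.
have S_ge0 : 0 <= S by rewrite sumr_ge0.
set t : R := n%:R / n.+1%:R.
have t_range : 0 <= t <= 1.
  by rewrite divr_ge0 ?ler0n //= ler_pdivrMr ?ltr0n // mul1r ler_nat.
have n1_neq0 : 1 + n%:R != 0 :> R by rewrite gt_eqF //; lra.
have -> : (F y + S) / n.+1%:R = t * (S / n%:R) + (1 - t) * F y.
  by rewrite /t; field; rewrite ?n1_neq0 ?(gt_eqF nR_gt0).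
apply: le_trans (ler_wpM2l (ler0n _ _)
  (powR_convex_comb t_range (divr_ge0 S_ge0 (ltW nR_gt0)) (F_ge0 y))) _.
have -> : n.+1%:R * (t * (S / n%:R) `^ p + (1 - t) * F y `^ p) =
    n%:R * (S / n%:R) `^ p + F y `^ p.
  by rewrite /t; field; rewrite ?n1_neq0 ?(gt_eqF nR_gt0).
by rewrite addrC lerD2l.
Qed.

Lemma powR_sum_le (I : Type) (s : seq I) (F : I -> R) : (forall i, 0 <= F i) ->
  (\sum_(i <- s) F i) `^ p <= (size s)%:R `^ (p - 1) * \sum_(i <- s) F i `^ p.
Proof.
move=> F_ge0; have p_neq0 : p != 0 by rewrite gt_eqF // (lt_le_trans ltr01 p_ge1).
have [s_nil|s_gt0] := posnP (size s).
  by rewrite (size0nil s_nil) !big_nil powR0 // mulr0.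
set n := size s; set S := \sum_(i <- s) F i.
have nR_gt0 : 0 < n%:R :> R by rewrite ltr0n.
have -> : S = n%:R * (S / n%:R) by field; rewrite gt_eqF.
rewrite powRM ?ler0n ?divr_ge0 ?ler0n ?sumr_ge0 //.
have -> : n%:R `^ p = n%:R `^ (p - 1) * n%:R :> R.
  rewrite -[in LHS](subrK 1 p) (@powRD _ _ (p - 1) 1) ?powRr1 ?ler0n //.
  by rewrite (gt_eqF nR_gt0) implybT.
by rewrite -mulrA ler_wpM2l ?powR_ge0 // powR_mean_le.
Qed.

Lemma powR_add_le (x y : R) : 0 <= x -> 0 <= y ->
  (x + y) `^ p <= 2 `^ (p - 1) * (x `^ p + y `^ p).
Proof.
move=> x_ge0 y_ge0.
have := powR_sum_le [:: true; false] (F := fun b => if b then x else y).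
by rewrite !big_cons !big_nil !addr0; apply; case.
Qed.

End power_mean.

Section cabs.
Local Open Scope complex_scope.
Local Open Scope ring_scope.
Variable R : realType.
Local Notation C := R[i].

Lemma cabs_normc (z : C) : (cabs z)%:C = `|z|.
Proof. by rewrite normc_def. Qed.

Lemma cabs0 : cabs (0 : C) = 0.
Proof. by rewrite /cabs /= expr0n addr0 sqrtr0. Qed.

Lemma cabs_ge0 (z : C) : 0 <= cabs z.
Proof. by rewrite -lecR cabs_normc normr_ge0. Qed.

Lemma cabsM (x y : C) : cabs (x * y) = cabs x * cabs y.
Proof. by apply: complexI; rewrite rmorphM /= !cabs_normc normrM. Qed.

Lemma cabsV (x : C) : cabs x^-1 = (cabs x)^-1.
Proof. by apply: complexI; rewrite fmorphV /= !cabs_normc normfV. Qed.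

Lemma cabsN (x : C) : cabs (- x) = cabs x.
Proof. by apply: complexI; rewrite !cabs_normc normrN. Qed.

Lemma cabsD (x y : C) : cabs (x + y) <= cabs x + cabs y.
Proof. by rewrite -lecR rmorphD /= !cabs_normc ler_normD. Qed.

Lemma cabsB (x y : C) : cabs x - cabs y <= cabs (x - y).
Proof. by rewrite -lecR rmorphB /= !cabs_normc lerB_dist. Qed.

Lemma cabs_sum (I : Type) (s : seq I) (F : I -> C) :
  cabs (\sum_(i <- s) F i) <= \sum_(i <- s) cabs (F i).
Proof.
rewrite -lecR rmorph_sum /= cabs_normc.
under [X in _ <= X]eq_bigr do rewrite cabs_normc.
exact: ler_norm_sum.
Qed.

Lemma expi0 : expi (0 : R) = 1.
Proof. by rewrite /expi cos0 sin0. Qed.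

Lemma cabs_expi (t : R) : cabs (expi t) = 1.
Proof. by rewrite /cabs /expi /= cos2Dsin2 sqrtr1. Qed.

Lemma cabs_real (x : R) : cabs (Complex x 0) = `|x|.
Proof. by rewrite /cabs /= expr0n addr0 sqrtr_sqr. Qed.

End cabs.

Section translation_sums.
Variable R : realType.
Local Notation C := R[i].

Lemma zsumE (K : nat) (f : int -> C) :
  zsum K f = f 0 + \sum_(1 <= n < K.+1) (f n%:Z + f (- n%:Z)).
Proof.
elim: K => [|K IH].
  by rewrite /zsum big_ord_recr big_ord0 /= add0r big_geq // muln0 subr0 addr0.
rewrite (@big_nat_recr _ _ _ K.+1 1) //= addrA -IH /zsum.
rewrite -(big_mkord xpredT (fun i : nat => f (i%:Z - K.+1%:Z))).
rewrite -(big_mkord xpredT (fun i : nat => f (i%:Z - K%:Z))).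
have -> : (2 * K.+1).+1 = ((2 * K).+1).+2 by lia.
rewrite big_nat_recl // big_nat_recr //= addrCA; congr (_ + _).
  by apply: eq_bigr => i _; congr (f _); lia.
by rewrite addrC; congr (f _ + f _); lia.
Qed.

Lemma ipN_OpN (N K : nat) (b Psi Phi : int -> C) :
  ipN N (OpN K b Psi) Phi = zsum K (fun m => b m * ipN N (TN m Psi) Phi).
Proof.
rewrite /ipN /OpN /zsum.
under [RHS]eq_bigr do rewrite mulrCA big_distrr /=.
rewrite -big_distrr /= exchange_big /=; congr (_ * _); apply: eq_bigr => k _.
by rewrite big_distrl /=; apply: eq_bigr => i _; rewrite mulrA.
Qed.

End translation_sums.

Section eigenbasis.
Variables (R : realType) (N : nat) (kappa2 : R) (phi : 'I_N -> int -> R[i]).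
Hypothesis phi_onb : onb_HN kappa2 phi.

Definition TN_diag (j : 'I_N) (m : int) : R[i] := ipN N (TN m (phi j)) (phi j).

Definition TN_diag_l1 (K : nat) (j : 'I_N) : R :=
  \sum_(1 <= n < K.+1) (cabs (TN_diag j n%:Z) + cabs (TN_diag j (- n%:Z))).

Lemma TN_diag0 j : TN_diag j 0 = 1.
Proof.
have -> : TN_diag j 0 = ipN N (phi j) (phi j).
  by rewrite /TN_diag; congr ipN; apply: funext => k; rewrite /TN subr0.
by case: phi_onb => _ ->; rewrite eqxx.
Qed.

Lemma TN_diag_l1_ge0 K j : 0 <= TN_diag_l1 K j.
Proof. by rewrite sumr_ge0 // => n _; rewrite addr_ge0 ?cabs_ge0. Qed.

Lemma dev_le_TN_diag_l1 K (a : int -> R[i]) (c0 r : R) j q :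
  (forall m, cabs (a m) <= c0 * r) -> 0 < r <= cabs (a 0) ->
  dev phi K a j q <= c0 * TN_diag_l1 K j.
Proof.
move=> a_le /andP[r_gt0 r_le_a0].
have a0_gt0 : 0 < cabs (a 0) := lt_le_trans r_gt0 r_le_a0.
have a0_neq0 : a 0 != 0 by apply: contraTneq a0_gt0 => ->; rewrite cabs0 ltxx.
have c0_gt0 : 0 < c0 by rewrite -(pmulr_lgt0 _ r_gt0) (lt_le_trans a0_gt0 (a_le 0)).
have b_le m : cabs (transl_coef a q m) <= c0 * r.
  by rewrite /transl_coef cabsM cabs_expi mulr1.
have b0E : transl_coef a q 0 = a 0.
  by rewrite /transl_coef mulr0 mul0r oppr0 expi0 mulr1.
rewrite /dev ipN_OpN zsumE b0E -/(TN_diag j 0) TN_diag0 mulr1.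
set S := \sum_(_ <= _ < _) _.
have S_le : cabs S <= c0 * r * TN_diag_l1 K j.
  rewrite /S /TN_diag_l1 big_distrr /=.
  apply: le_trans (cabs_sum _ _) _; apply: ler_sum => n _.
  apply: le_trans (cabsD _ _) _; rewrite mulrDr !(cabsM (transl_coef _ _ _)).
  by apply: lerD; apply: ler_wpM2r; rewrite ?cabs_ge0.
have -> : (a 0 + S) / a 0 - 1 = S / a 0 by field.
rewrite cabsM cabsV ler_pdivrMr // (le_trans S_le) // mulrAC.
by rewrite ler_wpM2l // mulr_ge0 ?TN_diag_l1_ge0 // ltW.
Qed.

Lemma TN_diag_l1_powR_le (p : R) K j : 1 <= p ->
  TN_diag_l1 K j `^ p <= 2 `^ (p - 1) * K%:R `^ (p - 1) *
    \sum_(1 <= n < K.+1) (cabs (TN_diag j n%:Z) `^ p + cabs (TN_diag j (- n%:Z)) `^ p).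
Proof.
move=> p_ge1; apply: le_trans (powR_sum_le p_ge1 _ _) _.
  by move=> n; rewrite addr_ge0 ?cabs_ge0.
rewrite size_iota subSS subn0 [2 `^ _ * _]mulrC -mulrA ler_wpM2l ?powR_ge0 //.
rewrite big_distrr /=; apply: ler_sum => n _.
by rewrite powR_add_le ?cabs_ge0.
Qed.

Lemma sum_TN_diag_powR (p D : R) : (0 < N)%N ->
  \sum_j \sum_(1 <= n < (Num.truncn D).+1)
     (cabs (TN_diag j n%:Z) `^ p + cabs (TN_diag j (- n%:Z)) `^ p)
  = N%:R * sumVp phi p D.
Proof.
move=> N_gt0; rewrite exchange_big /sumVp big_distrr /=; apply: eq_bigr => n _.
by rewrite /Vp mulrDr !mulrA mulfV ?pnatr_eq0 -?lt0n // !mul1r -big_split.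
Qed.

Lemma card_Sexc_powR_le K (a : int -> R[i]) (L p : R) (X : 'I_N -> R) :
  0 <= p -> 0 < L -> (forall j q, dev phi K a j q <= X j) ->
  #|Sexc phi K a L|%:R * L `^ p <= \sum_j X j `^ p.
Proof.
move=> p_ge0 L_gt0 dev_le.
have L_le j : j \in Sexc phi K a L -> L <= X j.
  rewrite inE => /asboolP L_le_sup; rewrite -lee_fin (le_trans L_le_sup) //.
  by apply: ge_ereal_sup => _ [q _ <-]; rewrite lee_fin.
rewrite mulr_natl -sumr_const big_mkcond /=; apply: ler_sum => j _.
case: ifP => [/L_le L_le_X | _]; last by rewrite powR_ge0.
apply: ge0_ler_powR; rewrite ?nnegrE //; first exact: ltW.
exact: le_trans (ltW L_gt0) L_le_X.
Qed.

Lemma card_Sexc_le (p c0 r L D : R) (a : int -> R[i]) :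
  1 <= p -> (0 < N)%N -> 0 < L -> 0 <= D ->
  (forall m, cabs (a m) <= c0 * r) -> 0 < r <= cabs (a 0) ->
  #|Sexc phi (Num.truncn D) a L|%:R / N%:R
    <= c0 `^ p * 2 `^ (p - 1) * D `^ (p - 1) / L `^ p * sumVp phi p D.
Proof.
move=> p_ge1 N_gt0 L_gt0 D_ge0 a_le a0_ge; set K := Num.truncn D.
have p_ge0 : 0 <= p := le_trans ler01 p_ge1.
have c0_ge0 : 0 <= c0.
  case/andP: a0_ge => r_gt0 _.
  by rewrite -(pmulr_lge0 _ r_gt0) (le_trans (cabs_ge0 (a 0)) (a_le 0)).
have NR_gt0 : 0 < N%:R :> R by rewrite ltr0n.
have Lp_gt0 : 0 < L `^ p by rewrite powR_gt0.
have KD : K%:R `^ (p - 1) <= D `^ (p - 1).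
  by apply: ge0_ler_powR; rewrite ?nnegrE ?subr_ge0 ?ler0n ?truncn_le.
have markov := card_Sexc_powR_le (X := fun j => c0 * TN_diag_l1 K j) p_ge0 L_gt0
  (fun j q => dev_le_TN_diag_l1 K j q a_le a0_ge).
have card_le : #|Sexc phi K a L|%:R * L `^ p
    <= c0 `^ p * 2 `^ (p - 1) * D `^ (p - 1) * (N%:R * sumVp phi p D).
  apply: le_trans markov _.
  under eq_bigr do rewrite powRM ?TN_diag_l1_ge0 //.
  rewrite -big_distrr -sum_TN_diag_powR // -!mulrA ler_wpM2l ?powR_ge0 //.
  rewrite mulrA big_distrr /=; apply: ler_sum => j _.
  apply: le_trans (TN_diag_l1_powR_le K j p_ge1) _.
  rewrite ler_wpM2r ?ler_wpM2l ?powR_ge0 // sumr_ge0 // => n _.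
  by rewrite addr_ge0 ?powR_ge0.
have -> : c0 `^ p * 2 `^ (p - 1) * D `^ (p - 1) / L `^ p * sumVp phi p D
    = c0 `^ p * 2 `^ (p - 1) * D `^ (p - 1) * (N%:R * sumVp phi p D) / L `^ p / N%:R.
  by field; rewrite !gt_eqF.
by rewrite ler_pM2r ?invr_gt0 // ler_pdivlMr.
Qed.

End eigenbasis.

Section small_scales.
Variable R : realType.

Lemma D_hyp_small_scale (D : R -> R) (C1 : R) : D_hyp D ->
  exists2 r0, 0 < r0 & forall r, 0 < r < r0 ->
    [/\ 0 < D r, 1 <= r * D r, C1 / D r <= r & 2 * r <= 1].
Proof.
move=> hD; set eps := (`|C1| + 1)^-1.
have C11_gt0 : 0 < `|C1| + 1 by rewrite ltr_wpDl.
have eps_gt0 : 0 < eps by rewrite invr_gt0.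
have eps_le1 : eps <= 1 by rewrite invf_le1 // lerDr.
have C1eps_le1 : `|C1| * eps <= 1 by rewrite ler_pdivrMr // mul1r lerDl.
have [delta [delta_gt0 D_large]] := hD eps eps_gt0.
exists (Num.min delta (1/2)); first by rewrite lt_min delta_gt0 /=; lra.
move=> r /andP[r_gt0]; rewrite lt_min => /andP[r_lt_delta r_lt_half].
have [D_gt0 invD_le] : 0 < D r /\ (D r)^-1 <= eps * r.
  by apply: D_large; rewrite r_gt0 r_lt_delta.
split=> //; last lra.
- rewrite -ler_pdivrMr // div1r (le_trans invD_le) //.
  by rewrite -[leRHS]mul1r ler_wpM2r // ltW.
- apply: (@le_trans _ _ (`|C1| / D r)).
    by rewrite ler_wpM2r ?invr_ge0 ?ler_norm // ltW.
  rewrite (le_trans (ler_wpM2l (normr_ge0 C1) invD_le)) // mulrA.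
  by rewrite -[leRHS]mul1r ler_wpM2r // ltW.
Qed.

Lemma arc_approx_coef_bounds (D : R -> R) (c0 C1 : R) (sgn : bool)
    (a : R -> int -> R[i]) (r : R) :
  arc_approx D c0 C1 sgn a -> 0 < r -> 1 <= r * D r -> C1 / D r <= r -> 2 * r <= 1 ->
  (forall m, cabs (a r m) <= c0 * r) /\ 0 < r <= cabs (a r 0).
Proof.
move=> approx r_gt0 rD_ge1 C1D_le r_le.
have [_ _ a0_near coef_le] := approx r r_gt0 rD_ge1.
split=> //; rewrite r_gt0 /=.
move: a0_near; rewrite /arc_vol min_l // => a0_near.
have := cabsB (Complex (2 * r) 0) (Complex (2 * r) 0 - a r 0).
rewrite cabs_real -cabsN opprB ger0_norm ?opprB; last lra.
rewrite (addrC (Complex _ _)) addrNK.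
lra.
Qed.

End small_scales.

Theorem lemma3p5 (R : realType) (p c0 : R) :
  1 <= p -> 0 < c0 ->
  exists c : R, 0 < c /\
  forall (C1 : R) (D : R -> R) (ap am : R -> int -> R[i]),
    D_hyp D ->
    arc_approx D c0 C1 true ap ->
    arc_approx D c0 C1 false am ->
    exists r0 : R, 0 < r0 /\
    forall r : R, 0 < r < r0 ->
    forall (N : nat) (kappa : R * R) (phi : 'I_N -> int -> R[i]) (L : R),
      (0 < N)%N -> onb_HN kappa.2 phi -> 0 < L ->
      (#|Sexc phi (Num.truncn (D r)) (ap r) L|%:R / N%:R
         <= c * (D r) `^ (p - 1) / L `^ p * sumVp phi p (D r))
      /\
      (#|Sexc phi (Num.truncn (D r)) (am r) L|%:R / N%:R
         <= c * (D r) `^ (p - 1) / L `^ p * sumVp phi p (D r)).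
Proof.
move=> p_ge1 c0_gt0.
exists (c0 `^ p * 2 `^ (p - 1)); split; first by rewrite mulr_gt0 ?powR_gt0.
move=> C1 D ap am hD approx_p approx_m.
have [r0 r0_gt0 small] := D_hyp_small_scale C1 hD.
exists r0; split=> // r r_range N kappa phi L N_gt0 onb L_gt0.
have r_gt0 : 0 < r by case/andP: r_range.
have [D_gt0 rD_ge1 C1D_le r_le] := small r r_range.
have [ap_le ap0_ge] := arc_approx_coef_bounds approx_p r_gt0 rD_ge1 C1D_le r_le.
have [am_le am0_ge] := arc_approx_coef_bounds approx_m r_gt0 rD_ge1 C1D_le r_le.
split; first exact: (card_Sexc_le onb p_ge1 N_gt0 L_gt0 (ltW D_gt0) ap_le ap0_ge).
exact: (card_Sexc_le onb p_ge1 N_gt0 L_gt0 (ltW D_gt0) am_le am0_ge).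
Qed.
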